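(* Let $F,G:\mathbb{F}_{2^n}\to\mathbb{F}_{2^n}$ be CCZ-equivalent via the affine permutation $\mathcal{A}(u)=\begin{pmatrix}\mathcal{A}_{11}&\mathcal{A}_{12}\\ \mathcal{A}_{21}&\mathcal{A}_{22}\end{pmatrix}u+\begin{pmatrix}C\\ D\end{pmatrix}$ of $\mathbb{F}_{2^n}\times\mathbb{F}_{2^n}$, i.e. $\{(x,G(x)):x\in\mathbb{F}_{2^n}\}=\{\mathcal{A}(x,F(x)):x\in\mathbb{F}_{2^n}\}$. Then for all $a,b,c,d\in\mathbb{F}_{2^n}$, $$\mathrm{EBCT}_F(a,b,c,d)=\mathrm{EBCT}_G(\alpha,\beta,\gamma,\delta),$$ where $\alpha=\mathcal{A}_{12}b+\mathcal{A}_{11}a$, $\beta=\mathcal{A}_{22}b+\mathcal{A}_{21}a$, $\gamma=\mathcal{A}_{12}d+\mathcal{A}_{11}c$, $\delta=\mathcal{A}_{22}d+\mathcal{A}_{21}c$. Since the map $(a,b,c,d)\mapsto(\alpha,\beta,\gamma,\delta)$ is a bijection of $\mathbb{F}_{2^n}^4$, the multiset of EBCT entries (the EBCT spectrum) is preserved under CCZ-equivalence.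
   Context: Elements of $\mathbb{F}_{2^n}$ are identified with vectors of $\mathbb{F}_2^n$; $\mathcal{A}_{ij}:\mathbb{F}_{2^n}\to\mathbb{F}_{2^n}$ are $\mathbb{F}_2$-linear maps, $C,D\in\mathbb{F}_{2^n}$, and $\mathcal{A}$ is a bijection of $\mathbb{F}_{2^n}\times\mathbb{F}_{2^n}$. For any function $H:\mathbb{F}_{2^n}\to\mathbb{F}_{2^n}$ (not necessarily a permutation), $$\mathrm{EBCT}_H(a,b,c,d)=\left|\left\{X\in\mathbb{F}_{2^n} : H(X)+H(X+a)=b,\ H(X)+H(X+c)=d,\ H(X+a+c)+H(X+a)=d\right\}\right|.$$ *)

From mathcomp Require Import all_boot all_order all_algebra all_field.
Set Implicit Arguments. Unset Strict Implicit. Unset Printing Implicit Defensive.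
Import GRing.Theory.
Local Open Scope ring_scope.

Definition EBCT (K : finFieldType) (H : K -> K) (a b c d : K) : nat :=
  #|[set X : K | [&& H X + H (X + a) == b,
                     H X + H (X + c) == d &
                     H (X + a + c) + H (X + a) == d]]|.

Definition affA (K : finFieldType) (A11 A12 A21 A22 : K -> K) (C D : K)
  (p : K * K) : K * K :=
  (A11 p.1 + A12 p.2 + C, A21 p.1 + A22 p.2 + D).

(* F_2-linearity of a map K -> K (K of characteristic 2): additivity. *)
Definition F2linear (K : finFieldType) (f : K -> K) : Prop :=
  forall x y, f (x + y) = f x + f y.

From mathcomp Require Import all_boot all_order all_algebra all_field.
From mathcomp Require Import ring.
Set Implicit Arguments. Unset Strict Implicit. Unset Printing Implicit Defensive.
Import GRing.Theory.
Local Open Scope ring_scope.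

(* In characteristic 2, EBCT_H(a,b,c,d) counts the points p of the graph of H
   such that p + (a,b), p + (c,d) and p + (a,b) + (c,d) lie on the graph as
   well, so it only depends on the graph as a subset of K x K.  A CCZ map is an
   affine bijection A(p) = L p + (C,D) sending the graph of F onto that of G,
   and A (p + w) = A p + L w; hence it carries the configurations counted by
   EBCT_F(a,b,c,d) bijectively onto those counted by EBCT_G(L(a,b), L(c,d)).
   As L is injective, the spectrum is preserved as well. *)

Definition graph (K : finType) (H : K -> K) : {set K * K} :=
  [set (x, H x) | x : K].

Definition shift_count (K : finZmodType) (S : {set K * K}) (u v : K * K) : nat :=
  #|[set p in S | [&& p + u \in S, p + v \in S & p + u + v \in S]]|.

Lemma mem_graph (K : finType) (H : K -> K) x y : ((x, y) \in graph H) = (H x == y).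
Proof. by apply/imsetP/eqP => [[x' _ [-> ->]] // | <-]; exists x. Qed.

Lemma pair_addE (K : zmodType) (x y a b : K) : (x, y) + (a, b) = (x + a, y + b).
Proof. by []. Qed.

Lemma shift_count_imset (K : finZmodType) (f L : K * K -> K * K)
    (S : {set K * K}) (u v : K * K) :
    injective f -> (forall p w, f (p + w) = f p + L w) ->
  shift_count (f @: S) (L u) (L v) = shift_count S u v.
Proof.
move=> finj fD; rewrite /shift_count -[RHS](card_imset _ finj).
apply: eq_card => q; apply/idP/imsetP => [|[p + ->]].
  rewrite inE => /andP[/imsetP[p Sp ->]].
  rewrite -!fD !(mem_imset _ _ finj) => cond.
  by exists p; rewrite // inE Sp.
rewrite !inE => /andP[Sp cond].
by rewrite imset_f // -!fD !(mem_imset _ _ finj).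
Qed.

Lemma card_level_set_inj (T : finType) (e : T -> nat) (f : T -> T) (k : nat) :
  injective f -> #|[set p | e (f p) == k]| = #|[set p | e p == k]|.
Proof.
move=> finj; rewrite -[RHS](card_preimset _ finj); apply: eq_card => p.
by rewrite !inE.
Qed.

Section CharacteristicTwo.

Variable K : finFieldType.
Hypothesis pchar2 : (2 \in [pchar K])%N.

Lemma addr_eq_pchar2 (x y z : K) : (x + y == z) = (y == x + z).
Proof. by apply/eqP/eqP => [<- | ->]; rewrite addKr_pchar2. Qed.

Lemma EBCT_graph (H : K -> K) (a b c d : K) :
  EBCT H a b c d = shift_count (graph H) (a, b) (c, d).
Proof.
have graph_inj : injective (fun x => (x, H x)) by move=> x x' [].
rewrite /EBCT /shift_count -(card_imset _ graph_inj).
apply: eq_card => -[x y]; rewrite !inE !pair_addE !mem_graph.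
apply/imsetP/and4P => [[x' + [-> ->]] | [/eqP <- /eqP Ha Hc Hac]].
  rewrite inE [H (_ + a + c) + _]addrC !addr_eq_pchar2.
  by case/and3P=> /eqP Ha -> Hac; rewrite -Ha.
exists x => //; rewrite inE [H (_ + a + c) + _]addrC !addr_eq_pchar2.
by rewrite Ha eqxx Hc Hac.
Qed.

End CharacteristicTwo.

Section CCZEquivalence.

Variables (K : finFieldType) (F G A11 A12 A21 A22 : K -> K) (C D : K).
Hypotheses (l11 : F2linear A11) (l12 : F2linear A12).
Hypotheses (l21 : F2linear A21) (l22 : F2linear A22).
Hypothesis affA_inj : injective (affA A11 A12 A21 A22 C D).
Hypothesis hccz : [set (x, G x) | x : K] = [set affA A11 A12 A21 A22 C D (x, F x) | x : K].

Let A := affA A11 A12 A21 A22 C D.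
Let L := affA A11 A12 A21 A22 0 0.

Lemma affA_addr p w : A (p + w) = A p + L w.
Proof.
case: p w => [x y] [u v].
by rewrite /A /L /affA !pair_addE /= l11 l12 l21 l22; congr pair; ring.
Qed.

Lemma affA_linear_part p : A p = L p + (C, D).
Proof. by case: p => x y; rewrite /A /L /affA pair_addE /= !addr0. Qed.

Lemma linear_part_inj : injective L.
Proof. by move=> p q E; apply: affA_inj; rewrite -/A !affA_linear_part E. Qed.

Lemma graph_ccz : graph G = A @: graph F.
Proof. by rewrite /graph hccz -imset_comp. Qed.

Hypothesis pchar2 : (2 \in [pchar K])%N.

Lemma EBCT_ccz a b c d :
  EBCT F a b c d =
  EBCT G (L (a, b)).1 (L (a, b)).2 (L (c, d)).1 (L (c, d)).2.
Proof.
rewrite !(EBCT_graph pchar2) -!surjective_pairing graph_ccz.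
by rewrite (shift_count_imset _ _ _ affA_inj affA_addr).
Qed.

Lemma card_EBCT_level_ccz k :
  #|[set p : K * K * K * K | EBCT F p.1.1.1 p.1.1.2 p.1.2 p.2 == k]| =
  #|[set p : K * K * K * K | EBCT G p.1.1.1 p.1.1.2 p.1.2 p.2 == k]|.
Proof.
pose Lab (p : K * K * K * K) := L (p.1.1.1, p.1.1.2).
pose Lcd (p : K * K * K * K) := L (p.1.2, p.2).
pose Psi p := ((Lab p).1, (Lab p).2, (Lcd p).1, (Lcd p).2).
have Psi_inj : injective Psi.
  move=> [[[a b] c] d] [[[a' b'] c'] d'] [E1 E2 E3 E4].
  have /linear_part_inj [-> ->] : L (a, b) = L (a', b') by rewrite /L /affA /= E1 E2.
  by have /linear_part_inj [-> ->] : L (c, d) = L (c', d') by rewrite /L /affA /= E3 E4.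
rewrite -(card_level_set_inj (fun p => EBCT G p.1.1.1 p.1.1.2 p.1.2 p.2) k Psi_inj).
by apply: eq_card => -[[[a b] c] d]; rewrite !inE EBCT_ccz.
Qed.

End CCZEquivalence.

Theorem mainTheorem3 (n : nat) (K : finFieldType) (hK : #|K| = (2 ^ n)%N)
  (F G : K -> K) (A11 A12 A21 A22 : K -> K) (C D : K)
  (l11 : F2linear A11) (l12 : F2linear A12)
  (l21 : F2linear A21) (l22 : F2linear A22)
  (hbij : bijective (affA A11 A12 A21 A22 C D))
  (hccz : [set (x, G x) | x : K] = [set affA A11 A12 A21 A22 C D (x, F x) | x : K]) :
  (forall a b c d : K,
     EBCT F a b c d =
     EBCT G (A12 b + A11 a) (A22 b + A21 a) (A12 d + A11 c) (A22 d + A21 c))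
  /\
  (forall k : nat,
     #|[set p : K * K * K * K | EBCT F p.1.1.1 p.1.1.2 p.1.2 p.2 == k]| =
     #|[set p : K * K * K * K | EBCT G p.1.1.1 p.1.1.2 p.1.2 p.2 == k]|).
Proof.
have pchar2 : (2 \in [pchar K])%N by apply: (card_finPcharP hK).
have affA_inj := bij_inj hbij.
split=> [a b c d | k].
  rewrite (EBCT_ccz l11 l12 l21 l22 affA_inj hccz pchar2) /affA /= !addr0.
  by rewrite ![A11 _ + _]addrC ![A21 _ + _]addrC.
exact: card_EBCT_level_ccz l11 l12 l21 l22 affA_inj hccz pchar2 k.
Qed.
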